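(* Let $R$ be a commutative ring with $1$, $A\in M_n(R)$ and $B=\mathrm{diag}(b_1,\dots,b_n)$ with $b_i\in R$. Then $$T(A,B)=(-1)^{\lfloor n/2\rfloor}\,\Delta(A)\,\delta(b_1,\dots,b_n)^n.$$
   Context: $M(A,B)\in M_{n^2}(R)$ is the block matrix of $n\times n$ blocks whose $(i,j)$-th block is $A^{j-1}B^{i-1}$ ($i,j=1,\dots,n$), and $T(A,B)=\det M(A,B)$. For $A\in M_n(R)$ and $t\in\{1,\dots,n\}$, $M_t(A)$ is the $n\times n$ matrix whose $j$-th column is the $t$-th column of $A^{j-1}$ ($j=1,\dots,n$, $A^0=I$); $\Delta_t(A)=\det M_t(A)$ and $\Delta(A)=\prod_{t=1}^n\Delta_t(A)$. $\delta(x_1,\dots,x_n)=\prod_{s<t}(x_t-x_s)$ is the Vandermonde determinant. *)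

From mathcomp Require Import all_boot all_order all_algebra.
Set Implicit Arguments. Unset Strict Implicit. Unset Printing Implicit Defensive.
Import GRing.Theory.
Local Open Scope ring_scope.

(* Block matrix with (i,j)-th block (0-based) A^j * B^i, i.e. the (i+1,j+1)
   block A^{(j+1)-1} B^{(i+1)-1} of the paper; built with mathcomp's \mxblock,
   so it is a square matrix of size \sum_(i < n) n = n^2. *)
Definition Mblock (R : comNzRingType) (n : nat) (A B : 'M[R]_n) :=
  \mxblock_(i < n, j < n) (A ^+ j *m B ^+ i).

Definition Tdet (R : comNzRingType) (n : nat) (A B : 'M[R]_n) : R :=
  \det (Mblock A B).

Definition Mt (R : comNzRingType) (n : nat) (A : 'M[R]_n) (t : 'I_n) : 'M[R]_n :=
  \matrix_(i < n, j < n) (A ^+ j) i t.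

Definition Delta_t (R : comNzRingType) (n : nat) (A : 'M[R]_n) (t : 'I_n) : R :=
  \det (Mt A t).

Definition Delta (R : comNzRingType) (n : nat) (A : 'M[R]_n) : R :=
  \prod_(t < n) Delta_t A t.

Definition vdm (R : comNzRingType) (n : nat) (x : 'I_n -> R) : R :=
  \prod_(t < n) \prod_(s < n | (s < t)%N) (x t - x s).

From mathcomp Require Import all_boot all_order all_algebra all_fingroup.
Set Implicit Arguments. Unset Strict Implicit. Unset Printing Implicit Defensive.
Import GRing.Theory.
Local Open Scope ring_scope.

(* Index the rows and columns of M(A, B) by pairs (block, entry) and let swap
   exchange the two components.  When B = diag(b), the (i, r), (j, c) entry of
   M is (A^j)_{rc} b_c^i, so M with its columns permuted by swap factors as
   P Q, where Q = diag(M_1(A), ..., M_n(A)) and P, conjugated by swap, is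
   diag(V, ..., V) with V the Vandermonde matrix of b.  Hence
   sgn(swap) T(A, B) = det(V)^n Delta(A).  The involution swap moves n^2 - n
   points, so it is a product of C(n, 2) disjoint transpositions, and
   C(n, 2) has the parity of floor(n/2). *)

Section InvolutionParity.
Variable T : finType.
Local Notation moved s := [pred x | s x != x].

Lemma tperm_mul_involutive (s : {perm T}) x :
  involutive s -> involutive (tperm x (s x) * s)%g.
Proof.
move=> sK z; rewrite !permM; case: (tpermP x (s x) z) => [->|->|zx zsx].
- by rewrite sK tpermL sK.
- by rewrite tpermR.
have xsz : x != s z by apply/eqP => e; apply: zsx; rewrite e sK.
have sxsz : s x != s z by rewrite (can_eq sK) eq_sym; apply/eqP.
by rewrite tpermD ?sK.
Qed.

Lemma card_moved_tperm_mul (s : {perm T}) x : involutive s -> s x != x ->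
  #|moved s| = #|moved (tperm x (s x) * s)%g|.+2.
Proof.
move=> sK hx; set y := s x.
have movedE : moved (tperm x y * s)%g =i [predD1 [predD1 moved s & x] & y].
  move=> z; rewrite !inE permM; case: (tpermP x y z) => [->|->|zx zy].
  - by rewrite /y sK eqxx /= andbF.
  - by rewrite eqxx.
  by rewrite (introF eqP zx) (introF eqP zy).
rewrite (eq_card movedE) [LHS](cardD1 x) inE hx add1n; congr _.+1.
by rewrite [LHS](cardD1 y) !inE /y sK hx eq_sym hx.
Qed.

Lemma odd_perm_involution (s : {perm T}) :
  involutive s -> odd_perm s = odd #|moved s|./2.
Proof.
move ek: #|moved s| => k; elim/ltn_ind: k s ek => k IH s ek sK.
case: (pickP (moved s)) => [x /= hx | fixed]; last first.
  have -> : s = 1%g by apply/permP => z; rewrite perm1; apply/eqP/negbFE/fixed.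
  by rewrite odd_perm1 -ek (eq_card0 fixed).
have ek' := card_moved_tperm_mul sK hx; rewrite ek in ek'.
have -> : s = (tperm x (s x) * (tperm x (s x) * s))%g by rewrite mulgA tperm2 mul1g.
rewrite odd_mul_tperm eq_sym hx ek' /=.
by rewrite (IH _ _ _ erefl (tperm_mul_involutive x sK)) // ek' ltnS leqnSn.
Qed.

End InvolutionParity.

Lemma odd_bin2 m : odd 'C(m, 2) = odd m./2.
Proof.
elim/ltn_ind: m => -[|[|m]] IH //.
rewrite !binS bin1 bin0 /= -(IH m) // addn1 !oddD /=.
by case: (odd 'C(m, 2)); case: (odd m).
Qed.

Lemma det_castmx (R : comPzRingType) m1 m2 (e : m1 = m2) (X : 'M[R]_m1) :
  \det (castmx (e, e) X) = \det X.
Proof. by case: m2 / e; rewrite castmx_id. Qed.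

Lemma det_mxdiag (R : comPzRingType) m (p_ : 'I_m -> nat)
    (B_ : forall i, 'M[R]_(p_ i)) :
  \det (\mxdiag_i B_ i) = \prod_i \det (B_ i).
Proof.
elim: m p_ B_ => [|m IH] p_ B_.
  have det_size0 k (e : k = 0%N) (X : 'M[R]_k) : \det X = 1.
    by move: X; rewrite e => X; exact: det_mx00.
  by rewrite (det_size0 _ (big_ord0 _ _ _ _)) big_ord0.
by rewrite mxdiag_recl det_castmx det_ublock IH big_ord_recl.
Qed.

Lemma mul_mx_diag_exprE (R : pzSemiRingType) m n (X : 'M[R]_(m, n)) (d : 'rV[R]_n)
    i r c :
  (X *m diag_mx d ^+ i) r c = X r c * d 0 c ^+ i.
Proof.
elim: i X => [|i IH] X; first by rewrite expr0 mulmx1 expr0 mulr1.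
by rewrite exprSr -mulmxE mulmxA mul_mx_diag mxE IH exprSr mulrA.
Qed.

Lemma det_Vandermonde_vdm (R : comNzRingType) n (b : 'I_n -> R) :
  \det (Vandermonde n (\row_i b i)) = vdm b.
Proof.
rewrite det_Vandermonde /vdm (exchange_big_dep xpredT) //=.
by apply: eq_bigr => t _; apply: eq_bigr => s _; rewrite !mxE.
Qed.

Section BlockIndices.
Variable n : nat.
Local Notation N := (\sum_(i < n) n)%N.

Definition blk (k : 'I_N) : 'I_n := @tagnat.sig1 n (fun=> n) k.
Definition ent (k : 'I_N) : 'I_n := @tagnat.sig2 n (fun=> n) k.
Definition pos (i j : 'I_n) : 'I_N := @tagnat.Rank n (fun=> n) i j.

Lemma blk_pos i j : blk (pos i j) = i. Proof. exact: tagnat.Rank1K. Qed.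
Lemma ent_pos i j : ent (pos i j) = j.
Proof. by apply: val_inj; rewrite /ent /pos tagnat.Rank2K. Qed.
Lemma pos_blk_ent k : pos (blk k) (ent k) = k. Proof. exact: tagnat.sig2K. Qed.

Lemma pos_inj i j i' j' : pos i j = pos i' j' -> i = i' /\ j = j'.
Proof.
by move=> e; split; [have := congr1 blk e | have := congr1 ent e];
  rewrite ?blk_pos ?ent_pos.
Qed.

Definition swap_pos (k : 'I_N) : 'I_N := pos (ent k) (blk k).

Lemma swap_posK : involutive swap_pos.
Proof. by move=> k; rewrite /swap_pos blk_pos ent_pos pos_blk_ent. Qed.

Definition swap : 'S_N := perm (can_inj swap_posK).

Lemma swapE k : swap k = pos (ent k) (blk k). Proof. by rewrite permE. Qed.

Lemma card_moved_swap : #|[pred k | swap k != k]| = (n * n - n)%N.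
Proof.
have fixedE : [pred k | swap k == k] =i [set pos i i | i : 'I_n].
  move=> k; rewrite !inE swapE; apply/eqP/imsetP => [e | [i _ ->]].
    have [ent_blk _] := pos_inj (etrans e (esym (pos_blk_ent k))).
    by exists (blk k); rewrite // -{1}(pos_blk_ent k) ent_blk.
  by rewrite blk_pos ent_pos.
have card_fixed : #|[pred k | swap k == k]| = n.
  rewrite (eq_card fixedE) card_imset ?card_ord //.
  by move=> i j /pos_inj[].
have card_pairs : #|'I_N| = (n * n)%N by rewrite card_ord sum_nat_const card_ord.
have card_unmoved : #|[predC [pred k | swap k != k]]| = n.
  by apply: etrans card_fixed; apply: eq_card => k; rewrite !inE negbK.
have := cardC [pred k | swap k != k].
by rewrite card_unmoved card_pairs => <-; rewrite addnK.
Qed.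

Lemma odd_perm_swap : odd_perm swap = odd n./2.
Proof.
rewrite odd_perm_involution; last first.
  by move=> k; rewrite !swapE !blk_pos !ent_pos pos_blk_ent.
by rewrite card_moved_swap -[RHS]odd_bin2 bin2 -subn1 mulnBr muln1.
Qed.

Lemma mxdiagE (R : comNzRingType) (C : 'I_n -> 'M[R]_n) k l :
  (\mxdiag_(i < n) C i : 'M[R]_N) k l =
    if blk k == blk l then C (blk k) (ent k) (ent l) else 0.
Proof.
rewrite /mxdiag mxE /blk /ent; case: eqP => _; last by rewrite mxE.
by rewrite conform_mx_id.
Qed.

Lemma MblockE (R : comNzRingType) (A B : 'M[R]_n) k l :
  Mblock A B k l = (A ^+ blk l *m B ^+ blk k) (ent k) (ent l).
Proof. by rewrite /Mblock mxE. Qed.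

Section Factorization.
Variables (R : comNzRingType) (A : 'M[R]_n) (b : 'I_n -> R).

Definition Vblock : 'M[R]_N :=
  \matrix_(k, l) (b (blk l) ^+ blk k * (ent k == ent l)%:R).

Definition Mtdiag : 'M[R]_N := \mxdiag_(t < n) Mt A t.

Lemma col_perm_Mblock_diag :
  col_perm swap (Mblock A (diag_mx (\row_i b i))) = Vblock *m Mtdiag.
Proof.
apply/matrixP => k l; rewrite [LHS]mxE MblockE swapE blk_pos ent_pos.
rewrite mul_mx_diag_exprE !mxE (bigD1 (pos (blk l) (ent k))) //=.
rewrite [X in _ + X]big1 ?addr0.
  by rewrite /Mtdiag mxdiagE !mxE blk_pos ent_pos !eqxx mulr1 mulrC.
move=> m hm; rewrite /Mtdiag mxdiagE !mxE.
case: eqP => [e2|_]; last by rewrite mulr0 mul0r.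
case: eqP => [e1|_]; last by rewrite mulr0.
by move: hm; rewrite -(pos_blk_ent m) -e1 -e2 eqxx.
Qed.

Lemma swap_conj_Vblock :
  row_perm swap (col_perm swap Vblock) =
    \mxdiag_(r < n) Vandermonde n (\row_i b i).
Proof.
apply/matrixP => k l; rewrite mxdiagE !mxE !swapE !blk_pos !ent_pos.
by case: eqP; rewrite ?mulr1 ?mulr0.
Qed.

Lemma det_Vblock : \det Vblock = vdm b ^+ n.
Proof.
have := congr1 determinant swap_conj_Vblock.
rewrite row_permE col_permE !det_mulmx !det_perm odd_permV.
rewrite det_mxdiag prodr_const card_ord det_Vandermonde_vdm => <-.
by rewrite mulrCA -signr_addb addbb mulr1.
Qed.

Lemma det_Mtdiag : \det Mtdiag = Delta A.
Proof. exact: det_mxdiag. Qed.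

End Factorization.
End BlockIndices.

Theorem mainTheorem3 (R : comNzRingType) (n : nat) (A : 'M[R]_n) (b : 'I_n -> R) :
  Tdet A (diag_mx (\row_i b i)) =
    (-1) ^+ (n./2) * Delta A * vdm b ^+ n.
Proof.
set sg : R := (-1) ^+ odd_perm (swap n).
have sg_sq : sg * sg = 1 by rewrite -signr_addb addbb.
have sgE : sg = (-1) ^+ n./2 by rewrite /sg odd_perm_swap signr_odd.
have factorization : sg * Tdet A (diag_mx (\row_i b i)) = vdm b ^+ n * Delta A.
  rewrite -det_Vblock -det_Mtdiag -det_mulmx -col_perm_Mblock_diag.
  by rewrite col_permE det_mulmx det_perm odd_permV mulrC.
have := congr1 ( *%R sg) factorization; rewrite mulrA sg_sq mul1r => ->.
by rewrite sgE -[RHS]mulrA [Delta A * _]mulrC.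
Qed.
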